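(* Let $N=[n]$, let $v:2^N\to\mathbb{R}_+$ be any monotone valuation with $v(\emptyset)=0$, let $c\in\mathbb{R}^n_+$ be a vector of service costs, and let $X$ be an up-consistent decision map for $v$. Then for every $\epsilon>0$ there exists an $\epsilon$-Nash equilibrium $p$ of the pricing game with costs defined by $v$, $c$ and $X$ such that $X(p)=X(c)$.
   Context: Pricing game with service costs: $N=[n]$ services, service $i$ controlled by seller $i$, who has cost $c_i\ge0$ for providing it. Buyer valuation $v:2^N\to\mathbb{R}_+$, monotone, $v(\emptyset)=0$. For $p\in\mathbb{R}^n_+$, $p(S)=\sum_{j\in S}p_j$, $D(v;p)=\arg\max_{S\subseteq N}(v(S)-p(S))$. A decision map is $X:\mathbb{R}^n_+\to2^N$ with $X(p)\in D(v;p)$ for all $p$. $X$ is up-consistent if for every $p$ with $X(p)=S$, every $i$ and every $p_i'>p_i$, either $X(p_i',p_{-i})=S$ or $i\notin X(p_i',p_{-i})$. Seller $i$'s utility is $u_i(p)=(p_i-c_i)\mathbf{1}\{i\in X(p)\}$. An $\epsilon$-Nash equilibrium is a $p\in\mathbb{R}^n_+$ with $u_i(p)\ge u_i(p_i',p_{-i})-\epsilon$ for all $i$ and $p_i'\in\mathbb{R}_+$. *)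

From mathcomp Require Import all_boot all_order all_algebra.
From mathcomp Require Import reals.
Set Implicit Arguments. Unset Strict Implicit. Unset Printing Implicit Defensive.
Import Order.TTheory GRing.Theory Num.Theory.
Local Open Scope ring_scope.

Section PricingGame.
Variables (R : realType) (n : nat).

Definition nonneg_vec (p : 'I_n -> R) : Prop := forall i, 0 <= p i.

Definition valuation (v : {set 'I_n} -> R) : Prop :=
  [/\ v set0 = 0, (forall S : {set 'I_n}, 0 <= v S) & (forall S T : {set 'I_n}, S \subset T -> v S <= v T)].

Definition psum (p : 'I_n -> R) (S : {set 'I_n}) : R := \sum_(j in S) p j.

Definition in_demand (v : {set 'I_n} -> R) (p : 'I_n -> R) (S : {set 'I_n}) : Prop :=
  forall T : {set 'I_n}, v T - psum p T <= v S - psum p S.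

Definition upd (p : 'I_n -> R) (i : 'I_n) (x : R) : 'I_n -> R :=
  fun j => if j == i then x else p j.

(* X : R^n_+ -> 2^N with X(p) \in D(v;p); X is given on all of 'I_n -> R
   but only its values on nonnegative price vectors are constrained/used. *)
Definition decision_map (v : {set 'I_n} -> R) (X : ('I_n -> R) -> {set 'I_n}) : Prop :=
  forall p, nonneg_vec p -> in_demand v p (X p).

Definition up_consistent (X : ('I_n -> R) -> {set 'I_n}) : Prop :=
  forall p, nonneg_vec p -> forall (i : 'I_n) (x : R), p i < x ->
    X (upd p i x) = X p \/ i \notin X (upd p i x).

Definition utility (X : ('I_n -> R) -> {set 'I_n}) (c : 'I_n -> R)
  (i : 'I_n) (p : 'I_n -> R) : R :=
  if i \in X p then p i - c i else 0.

Definition eps_nash (X : ('I_n -> R) -> {set 'I_n}) (c : 'I_n -> R) (eps : R)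
  (p : 'I_n -> R) : Prop :=
  nonneg_vec p /\
  forall (i : 'I_n) (x : R), 0 <= x ->
    utility X c i (upd p i x) - eps <= utility X c i p.

End PricingGame.

(* Start at the cost vector [c] and let sellers who can gain more than [eps]
   deviate one at a time.  A seller whose profitable deviation keeps her
   service sold must raise her price by more than [eps]; by up-consistency
   the purchased set [S = X c] does not change, so the buyer's surplus
   [v S - p(S)] drops by more than [eps].  That surplus stays nonnegative,
   because the empty bundle is always available, so the process stops after
   finitely many steps at an [eps]-Nash equilibrium still selling [S]. *)
From mathcomp Require Import all_boot all_order all_algebra.
From mathcomp Require Import reals.
From Stdlib Require Import Classical.
From mathcomp Require Import lra.
Set Implicit Arguments. Unset Strict Implicit. Unset Printing Implicit Defensive.
Import Order.TTheory GRing.Theory Num.Theory.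
Local Open Scope ring_scope.

Lemma psum_upd (R : realType) (n : nat) (p : 'I_n -> R) (S : {set 'I_n})
    (i : 'I_n) (x : R) :
  i \in S -> psum (upd p i x) S = psum p S + (x - p i).
Proof.
move=> iS; rewrite /psum (bigD1 i iS) [in RHS](bigD1 i iS) /= /upd eqxx.
under eq_bigr => j /andP[_ /negbTE ->] do [].
lra.
Qed.

Section Descent.
Variables (R : realType) (n : nat).
Variables (v : {set 'I_n} -> R) (c : 'I_n -> R) (X : ('I_n -> R) -> {set 'I_n}).
Hypotheses (v_valuation : valuation v) (c_nonneg : nonneg_vec c).
Hypotheses (X_decision : decision_map v X) (X_up : up_consistent X).

Definition surplus (p : 'I_n -> R) : R := v (X c) - psum p (X c).

Definition admissible (p : 'I_n -> R) : Prop :=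
  [/\ X p = X c, forall j, c j <= p j & forall j, j \notin X c -> p j = c j].

Lemma admissible_cost : admissible c.
Proof. by split. Qed.

Lemma admissible_nonneg p : admissible p -> nonneg_vec p.
Proof. by case=> _ cp _ j; exact: le_trans (c_nonneg j) (cp j). Qed.

Lemma surplus_ge0 p : admissible p -> 0 <= surplus p.
Proof.
move=> adm; have [XpS _ _] := adm; case: v_valuation => v0 _ _.
have := X_decision (admissible_nonneg adm) set0.
by rewrite /surplus -XpS /psum big_set0 v0 subr0.
Qed.

Lemma utility_ge0 p i : admissible p -> 0 <= utility X c i p.
Proof. by case=> _ cp _; rewrite /utility; case: ifP; rewrite ?subr_ge0. Qed.

Section Deviation.
Variables (eps : R) (p : 'I_n -> R) (i : 'I_n) (x : R).
Hypotheses (eps_gt0 : 0 < eps) (p_admissible : admissible p).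
Hypothesis gain : utility X c i p < utility X c i (upd p i x) - eps.

Lemma deviation_sold : i \in X (upd p i x).
Proof.
apply/negPn/negP => /negbTE iN; move: gain; rewrite {2}/utility iN.
by have := utility_ge0 i p_admissible; have := eps_gt0; lra.
Qed.

(* An unsold [i] is priced at cost, so either way its profit at [p] is
   [p i - c i]. *)
Lemma deviation_raises_price : p i + eps < x.
Proof.
have [_ _ pout] := p_admissible; have [XpS _ _] := p_admissible.
move: gain; rewrite /utility deviation_sold /upd eqxx.
case: ifP => [_|iN]; first lra.
by rewrite pout -?XpS ?iN //; lra.
Qed.

Lemma deviation_keeps_demand : X (upd p i x) = X p.
Proof.
have pix : p i < x by have := deviation_raises_price; have := eps_gt0; lra.
case: (X_up (admissible_nonneg p_admissible) pix) => //.
by rewrite deviation_sold.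
Qed.

Lemma deviation_in_demand : i \in X c.
Proof.
by have [<- _ _] := p_admissible; rewrite -deviation_keeps_demand deviation_sold.
Qed.

Lemma admissible_deviation : admissible (upd p i x).
Proof.
have [XpS cp pout] := p_admissible.
split; first by rewrite deviation_keeps_demand.
- move=> j; rewrite /upd; case: eqP => [->|_] //.
  by have := cp i; have := deviation_raises_price; have := eps_gt0; lra.
- move=> j jN; rewrite /upd; case: eqP => [ej|_]; last exact: pout.
  by move: jN; rewrite ej deviation_in_demand.
Qed.

Lemma surplus_deviation : surplus (upd p i x) < surplus p - eps.
Proof.
rewrite /surplus psum_upd ?deviation_in_demand //.
by have := deviation_raises_price; lra.
Qed.

End Deviation.

Lemma eps_nash_of_surplus_lt eps (k : nat) p :
  0 < eps -> admissible p -> surplus p < k%:R * eps ->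
  exists q, eps_nash X c eps q /\ X q = X c.
Proof.
move=> eps_gt0; elim: k p => [|k IH] p adm.
  by rewrite mul0r; have := surplus_ge0 adm; lra.
move=> small.
have [[i [x [_ gain]]]|no_gain] := classic (exists i x,
    0 <= x /\ utility X c i p < utility X c i (upd p i x) - eps).
  apply: (IH _ (admissible_deviation eps_gt0 adm gain)).
  move: small; rewrite -natr1 mulrDl mul1r.
  by have := surplus_deviation eps_gt0 adm gain; lra.
have [XpS _ _] := adm.
exists p; split => //; split; first exact: admissible_nonneg.
move=> i x x0; rewrite leNgt; apply/negP => gain.
by apply: no_gain; exists i, x.
Qed.

End Descent.

Theorem mainTheorem11 (R : realType) (n : nat)
  (v : {set 'I_n} -> R) (c : 'I_n -> R) (X : ('I_n -> R) -> {set 'I_n}) :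
  valuation v -> nonneg_vec c -> decision_map v X -> up_consistent X ->
  forall eps : R, 0 < eps ->
    exists p : 'I_n -> R, eps_nash X c eps p /\ X p = X c.
Proof.
move=> v_valuation c_nonneg X_decision X_up eps eps_gt0.
have c_admissible := admissible_cost c X.
pose k := Num.bound (surplus v c X c / eps).
apply: (eps_nash_of_surplus_lt v_valuation c_nonneg X_decision X_up (k := k)
  eps_gt0 c_admissible).
rewrite -ltr_pdivrMr //; apply/archi_boundP/divr_ge0; last exact: ltW.
by apply: surplus_ge0.
Qed.
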